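(* Let $n\ge 3$ be an integer. (1) If $n=3$ or $n=4$, then $l_0^{(n-1)^3}(n^3)>\frac{(n!)^{2n}}{n^{n^2}}$. (2) If $n\ge 5$, then $l_0^{(n-1)^3}(n^3)<\frac{(n!)^{2n}}{n^{n^2}}$.
   Context: For a positive integer $d$ and integer $m$, define $$u_0^d(m)=\binom{m-\lfloor \frac{d}{2}\rfloor -1}{\lfloor \frac{d-1}{2}\rfloor}+\binom{m-\lfloor \frac{d-1}{2}\rfloor -1}{\lfloor \frac{d}{2}\rfloor},$$ where $\binom{a}{b}=0$ when $a<b$; and for a number $x$, $l_0^d(x)=k$ if and only if $k$ is the integer with $u_0^d(k-1)<x\le u_0^d(k)$. *)

From mathcomp Require Import all_boot all_order all_algebra.
Import GRing.Theory Num.Theory.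
Local Open Scope ring_scope.

Definition binz (a : int) (b : nat) : nat :=
  match a with
  | Posz a' => 'C(a', b)
  | Negz _ => 0%N
  end.

(* u_0^d(m) = C(m - floor(d/2) - 1, floor((d-1)/2)) + C(m - floor((d-1)/2) - 1, floor(d/2)),
   for d a positive integer (so floor((d-1)/2) = (d.-1)./2). *)
Definition u0 (d : nat) (m : int) : nat :=
  (binz (m - (d./2)%:Z - 1) (d.-1)./2 + binz (m - ((d.-1)./2)%:Z - 1) d./2)%N.

Definition is_l0 (d : nat) (x : rat) (k : int) : Prop :=
  ((u0 d (k - 1))%:R < x) /\ (x <= (u0 d k)%:R).

(* Put d = (n - 1)^3.  Evaluating the binomials gives u_0^d(d + 1) = d + 1 and
   4 u_0^d(d + 2) >= (d + 1)(d + 3), so l_0^d(n^3) = d + 2 as soon as n >= 4,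
   while l_0^8(27) = 11.  On the other side
   (n!)^(2n) / n^(n^2) = ((n!)^2 / n^n)^n, and (n!)^2 >= 4 n^n for n >= 5 since
   (1 + 1/n)^n <= n + 1; so the ratio is at least 4^n > n^3 >= d + 2.
   For n = 3, 4 both sides are compared numerically. *)

From mathcomp Require Import all_boot all_order all_algebra zify.
Import Order.TTheory GRing.Theory Num.Theory.

Set Implicit Arguments.
Unset Strict Implicit.
Unset Printing Implicit Defensive.

Lemma half_add_uphalf e : (e./2 + uphalf e = e)%N.
Proof. by have := odd_double_half e; rewrite uphalf_half -addnn; lia. Qed.

Lemma binz_monotone (b : nat) : {homo binz^~ b : x y / (x <= y)%R >-> (x <= y)%N}.
Proof. by move=> [x|x] [y|y] //; rewrite lez_nat; apply: leq_bin2l. Qed.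

Lemma u0_monotone d : {homo u0 d : x y / (x <= y)%R >-> (x <= y)%N}.
Proof. by move=> x y le_xy; apply: leq_add; apply: binz_monotone; lia. Qed.

(* For d = e.+1 we have d./2 = uphalf e and (d.-1)./2 = e./2. *)
Lemma u0_succE e j :
  u0 e.+1 (e.+1 + j)%N = ('C(e./2 + j, e./2) + 'C(uphalf e + j, uphalf e))%N.
Proof.
have sum_e := half_add_uphalf e.
rewrite /u0 /=; congr (_ + _)%N.
- by rewrite (_ : _ - _ - 1 = (e./2 + j)%N%:Z)%R //; lia.
- by rewrite (_ : _ - _ - 1 = (uphalf e + j)%N%:Z)%R //; lia.
Qed.

Lemma u0_succ d : (0 < d)%N -> u0 d d.+1 = d.+1.
Proof.
case: d => // e _; have := u0_succE e 1; rewrite !addn1 !binSn => ->.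
by have := half_add_uphalf e; lia.
Qed.

Lemma bin_succ2_double h : (2 * 'C(h.+2, h) = h.+2 * h.+1)%N.
Proof. by have := mul_bin_left h.+2 h; rewrite binSn -addn2 addKn; lia. Qed.

Lemma u0_succ2_ge d : (0 < d)%N -> (d.+1 * d.+3 <= 4 * u0 d d.+2)%N.
Proof.
case: d => // e _; have := u0_succE e 2; rewrite !addn2 => ->.
have := bin_succ2_double (e./2); have := bin_succ2_double (uphalf e).
have := half_add_uphalf e; rewrite uphalf_half.
case: (odd e) => /= sum_e; nia.
Qed.

Lemma is_l0_uniq d x k k' : is_l0 d x k -> is_l0 d x k' -> k = k'.
Proof.
have lt_l0 k1 k2 : is_l0 d x k1 -> is_l0 d x k2 -> (k1 < k2)%R -> False.
  move=> [_ x_le] [lt_x _] lt_k; have : (k1 <= k2 - 1)%R by lia.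
  move/(u0_monotone d); rewrite -(ler_nat rat) => le_u.
  by have := le_lt_trans x_le (le_lt_trans le_u lt_x); rewrite ltxx.
move=> l0k l0k'; case: (ltgtP k k') => // lt_k.
- by case: (lt_l0 _ _ l0k l0k' lt_k).
- by case: (lt_l0 _ _ l0k' l0k lt_k).
Qed.

Lemma expnS_bernoulli a m : (a.+1 ^ m.+1 <= a.+1 * a ^ m + m * a.+1 ^ m)%N.
Proof.
elim: m => [|m IHm]; first by rewrite !expn0 expn1; lia.
move: IHm; rewrite [a.+1 ^ m.+2]expnS ![a.+1 ^ m.+1]expnS [a ^ m.+1]expnS.
move: (a ^ m) (a.+1 ^ m) => A B; nia.
Qed.

Lemma expSn_le_mul a : (a.+1 ^ a <= a.+1 * a ^ a)%N.
Proof. by have := expnS_bernoulli a a; rewrite expnS; nia. Qed.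

Lemma fact_sqr_ge n : (5 <= n)%N -> (4 * n ^ n <= n`! ^ 2)%N.
Proof.
elim: n => // n IHn; rewrite leq_eqVlt => /orP [/eqP <- // | n_ge5].
have := IHn n_ge5; have := expSn_le_mul n.
rewrite factS expnMn [n.+1 ^ n.+1]expnS.
move: (n`! ^ 2)%N (n ^ n)%N (n.+1 ^ n)%N => F A B; nia.
Qed.

Lemma cube_lt_exp4 n : (5 <= n)%N -> (n ^ 3 < 4 ^ n)%N.
Proof.
elim: n => // n IHn; rewrite leq_eqVlt => /orP [/eqP <- // | n_ge5].
have := IHn n_ge5; rewrite [(4 ^ n.+1)%N]expnS !expnS expn0 !muln1.
move: (4 ^ n)%N => P; nia.
Qed.

Lemma pred_cube_add2_le n : (2 <= n)%N -> ((n - 1) ^ 3 + 2 <= n ^ 3)%N.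
Proof. by case: n => [|m] // m_ge1; rewrite subn1 /= !expnS expn0 !muln1; nia. Qed.

Lemma cube_le_triple_pred_cube n : (4 <= n)%N -> (n ^ 3 <= 3 * (n - 1) ^ 3)%N.
Proof. by case: n => [|m] // m_ge3; rewrite subn1 /= !expnS expn0 !muln1; nia. Qed.

Lemma is_l0_cube n : (4 <= n)%N ->
  is_l0 ((n - 1) ^ 3) (n ^ 3)%:R ((n - 1) ^ 3 + 2)%N.
Proof.
move=> n_ge4; set d := ((n - 1) ^ 3)%N.
have d_ge27 : (27 <= d)%N by rewrite /d (_ : 27 = 3 ^ 3)%N // leq_exp2r //; lia.
have d_gt0 : (0 < d)%N by lia.
split; rewrite ?ltr_nat ?ler_nat.
- have -> : (((d + 2)%N)%:Z - 1 = d.+1)%R by lia.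
  rewrite (u0_succ d_gt0); have := @pred_cube_add2_le n; lia.
- rewrite addn2; have := @u0_succ2_ge d d_gt0.
  have := cube_le_triple_pred_cube n_ge4; rewrite -/d; nia.
Qed.

Lemma pred_cube_add2_mul_lt n : (5 <= n)%N ->
  (((n - 1) ^ 3 + 2) * n ^ (n ^ 2) < n`! ^ (2 * n))%N.
Proof.
move=> n_ge5.
have fact_pow_ge : (4 ^ n * n ^ (n ^ 2) <= n`! ^ (2 * n))%N.
  by rewrite -mulnn expnM -expnMn expnM leq_exp2r ?fact_sqr_ge //; lia.
apply: leq_trans fact_pow_ge; rewrite ltn_pmul2r ?expn_gt0; last lia.
by apply: leq_ltn_trans (cube_lt_exp4 n_ge5); apply: pred_cube_add2_le; lia.
Qed.

Lemma is_l0_three : is_l0 ((3 - 1) ^ 3) (3 ^ 3)%:R 11.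
Proof. by split; rewrite ?ltr_nat ?ler_nat; vm_compute. Qed.

Lemma fact3_ratio_lt : (3`! ^ (2 * 3) < 11 * 3 ^ (3 ^ 2))%N.
Proof. by vm_compute. Qed.

(* Both sides are about 10^11, far too large for unary [nat]: cancel the
   common factor (2 ^ 3) ^ 8 first. *)
Lemma fact4_ratio_lt : (4`! ^ (2 * 4) < 29 * 4 ^ (4 ^ 2))%N.
Proof.
have -> : (4`! ^ (2 * 4) = 3 ^ 8 * (2 ^ 3) ^ 8)%N by rewrite -expnMn.
have -> : (4 ^ (4 ^ 2) = 2 ^ 8 * (2 ^ 3) ^ 8)%N.
  by change (4 ^ (4 ^ 2))%N with ((2 ^ 2) ^ (4 ^ 2))%N; rewrite -!expnM -expnD.
by rewrite mulnA ltn_pmul2r ?expn_gt0.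
Qed.

Local Open Scope ring_scope.

Lemma ratio_lt_nat {F : numFieldType} (a b c : nat) : (0 < b)%N ->
  (a%:R / b%:R < c%:R :> F) = (a < c * b)%N.
Proof. by move=> b_gt0; rewrite ltr_pdivrMr ?ltr0n // -natrM ltr_nat. Qed.

Lemma nat_lt_ratio {F : numFieldType} (a b c : nat) : (0 < b)%N ->
  (c%:R < a%:R / b%:R :> F) = (c * b < a)%N.
Proof. by move=> b_gt0; rewrite ltr_pdivlMr ?ltr0n // -natrM ltr_nat. Qed.

Theorem proposition8 (n : nat) : (3 <= n)%N ->
  (exists k : int, is_l0 ((n - 1) ^ 3)%N (n ^ 3)%N%:R k) /\
  (forall k : int, is_l0 ((n - 1) ^ 3)%N (n ^ 3)%N%:R k ->
     ((n = 3%N \/ n = 4%N) ->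
        ((n`! ^ (2 * n))%N%:R / (n ^ (n ^ 2))%N%:R : rat) < k%:~R) /\
     ((5 <= n)%N ->
        (k%:~R : rat) < (n`! ^ (2 * n))%N%:R / (n ^ (n ^ 2))%N%:R)).
Proof.
move=> n_ge3; have pow_gt0 m : (0 < m ^ (m ^ 2))%N by rewrite expn_gt0; lia.
case: (ltnP n 4) => [n_lt4 | n_ge4].
  have n_eq3 : n = 3%N by lia.
  split=> [|k]; first by exists 11; rewrite n_eq3; exact: is_l0_three.
  rewrite n_eq3 => /(is_l0_uniq is_l0_three) <-.
  split=> [_ | n_ge5]; last by exfalso; lia.
  by rewrite -pmulrn (ratio_lt_nat _ _ (pow_gt0 3%N)) fact3_ratio_lt.
have l0_n := is_l0_cube n_ge4.
split=> [|k /(is_l0_uniq l0_n) <-]; first by eexists; exact: l0_n.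
rewrite -pmulrn (ratio_lt_nat _ _ (pow_gt0 n)) (nat_lt_ratio _ _ (pow_gt0 n)).
split=> [[n_eq3 | ->] | n_ge5].
- by exfalso; lia.
- by rewrite fact4_ratio_lt.
- exact: pred_cube_add2_mul_lt.
Qed.
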